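(* Let $q_1<q_2<\cdots$ be the primes, $\Pi(x)$ the prime-counting function, and let $\phi:\mathbb{N}_0\to\mathbb{N}_0$ be defined by $\phi(q_j)=q_{j+1}$ for every $j\ge1$ and $\phi(x)=0$ if $x$ is not prime (including $x=0$). Then $\phi(x)\neq x$ for all $x\in\mathbb{N}$ and $\phi$ has no cycle. Moreover, for $n\ge2$: (1) $M_n(\phi)$ is nilpotent of degree $\Pi(n)$. (2) For $1\le k\le\Pi(n)$, $M_n(\phi)^k=\sum_{j=1}^{\Pi(n)-k}E_n(q_{j+k},q_j)$ and $\#M_n(\phi)^k=\Pi(n)-k$. (3) $\widehat{M}_n(\phi)^{-1}=I+\sum_{1\le j<i\le\Pi(n)}E_n(q_i,q_j)$ and $\#\widehat{M}_n(\phi)^{-1}=n+\binom{\Pi(n)}{2}$.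
   Context: $\mathbb{N}=\{1,2,\dots\}$, $\mathbb{N}_0=\mathbb{N}\cup\{0\}$, $D_n=\{1,\dots,n\}$, $D_{n,0}=D_n\cup\{0\}$. The local function $\phi_n:D_{n,0}\to D_{n,0}$ is $\phi_n(x)=\phi(x)$ if $x\in D_n$ and $\phi(x)\in D_n$, and $\phi_n(x)=0$ otherwise. A cycle of $\phi$ is given by $m\ge2$ and $x\in\mathbb{N}$ with $\phi^m(x)=x$. For $1\le i\le n$, $\mathbf{e}_i$ is the $i$-th unit vector in $\mathbb{Z}^n$ and $\mathbf{e}_0$ the zero vector; $E_n(i,j)=\mathbf{e}_i\mathbf{e}_j^t$. $M_n(\phi)$ is the $n\times n$ matrix whose $j$-th column is $\mathbf{e}_{\phi_n(j)}$, $\widehat{M}_n(\phi)=I-M_n(\phi)$. $\#A$ is the number of nonzero entries of $A$. A matrix $A$ is nilpotent of degree $k$ if $A^k=0$ and $A^{k-1}\ne0$. *)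

From HB Require Import structures.
From mathcomp Require Import all_boot all_order all_algebra.
Set Implicit Arguments. Unset Strict Implicit. Unset Printing Implicit Defensive.
Import Order.TTheory GRing.Theory Num.Theory.

(* Indices: the set D_n = {1,...,n} is represented by 'I_n via i |-> i.+1. *)

Definition next_prime (m : nat) : nat :=
  ex_minn (ex_intro (fun p => (m < p) && prime p) (s2val (prime_above m))
     (introT andP (conj (s2valP (prime_above m)) (s2valP' (prime_above m))))).

(* q j = j-th prime (q 1 = 2, q 2 = 3, ...); q 0 = 0 is unused *)
Definition q (j : nat) : nat := iter j next_prime 0.

Definition primepi (x : nat) : nat := \sum_(i < x.+1) prime i.

Definition phi (x : nat) : nat := if prime x then q (primepi x).+1 else 0.

Definition local_fun (n : nat) (f : nat -> nat) (x : nat) : nat :=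
  if (0 < x <= n) && (0 < f x <= n) then f x else 0.

(* M_n(f): j-th column is e_{f_n(j)} (e_0 = 0) *)
Definition Mn (n : nat) (f : nat -> nat) : 'M[int]_n :=
  \matrix_(i < n, j < n) ((local_fun n f j.+1 == i.+1)%:R : int).

Definition Mhat (n : nat) (f : nat -> nat) : 'M[int]_n := 1%:M - Mn n f.

Definition En (n i j : nat) : 'M[int]_n :=
  \matrix_(a < n, b < n) (((a.+1 == i) && (b.+1 == j))%:R : int).

Definition nnz (n : nat) (A : 'M[int]_n) : nat :=
  #|[set ab : 'I_n * 'I_n | A ab.1 ab.2 != 0]|.

Definition nilpotent_of_degree (n : nat) (A : 'M[int]_n) (k : nat) : Prop :=
  (A ^+ k = 0 /\ A ^+ k.-1 <> 0)%R.

From mathcomp Require Import all_boot all_order all_algebra zify.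
Set Implicit Arguments. Unset Strict Implicit. Unset Printing Implicit Defensive.
Import Order.TTheory GRing.Theory Num.Theory.

(* phi moves the j-th prime to the (j+1)-th one and sends every other number
   to 0, so on D_n the k-th iterate of phi_n maps q_j to q_(j+k) when
   j + k <= Pi(n) and everything else to 0.  The k-th power of M_n(phi) is the
   0/1 matrix of this iterate, which gives (2) and the nilpotency degree.
   Since M_n(phi)^Pi(n) = 0, the inverse of I - M_n(phi) is the finite
   geometric series of M_n(phi); substituting i = j + k in (2) turns it into
   (3), and the prime q_i contributes i - 1 off-diagonal entries to its row. *)

Lemma next_primeP m :
  [/\ m < next_prime m, prime (next_prime m)
    & forall p, m < p -> prime p -> next_prime m <= p].
Proof.
rewrite /next_prime; case: ex_minnP => p /andP[mp pp] minp.
by split=> // p' mp' pp'; apply: minp; rewrite mp' pp'.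
Qed.

Lemma qS j : q j.+1 = next_prime (q j). Proof. by []. Qed.

Lemma ltn_qS j : q j < q j.+1.
Proof. by rewrite qS; case: (next_primeP (q j)). Qed.

Lemma leq_q : {mono q : i j / i <= j}.
Proof. by apply: leq_mono; apply: homo_ltn ltn_qS; apply: ltn_trans. Qed.

Lemma ltn_q : {mono q : i j / i < j}.
Proof. by move=> i j; rewrite !ltnNge leq_q. Qed.

Lemma q_prime j : 0 < j -> prime (q j).
Proof. by case: j => // j _; rewrite qS; case: (next_primeP (q j)). Qed.

Lemma q1 : q 1 = 2.
Proof.
have [_ /prime_gt1 p_gt1 minp] := next_primeP 0.
by apply/eqP; rewrite eqn_leq p_gt1 andbT minp.
Qed.

Lemma q_gt0 j : 0 < j -> 0 < q j.
Proof. by move/q_prime/prime_gt0. Qed.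

Lemma primepi0 : primepi 0 = 0.
Proof. by rewrite /primepi big_ord1. Qed.

Lemma primepiS x : primepi x.+1 = primepi x + prime x.+1.
Proof. by rewrite /primepi big_ord_recr. Qed.

Lemma q_primepi_bounds x : q (primepi x) <= x < q (primepi x).+1.
Proof.
elim: x => [|x /andP[le_qx lt_xq]]; first by rewrite primepi0; apply: ltn_qS.
rewrite primepiS; case: (boolP (prime x.+1)) => [px|npx]; rewrite ?addn1 ?addn0.
  have qx : q (primepi x).+1 = x.+1.
    apply/eqP; rewrite eqn_leq lt_xq qS.
    by case: (next_primeP (q (primepi x))) => _ _ ->.
  by rewrite qx leqnn /= -{1}qx ltn_qS.
rewrite (leq_trans le_qx) // ltn_neqAle lt_xq andbT.
by apply: contraNneq npx => ->; apply: q_prime.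
Qed.

Lemma leq_q_primepi j x : (q j <= x) = (j <= primepi x).
Proof.
have /andP[le_qx lt_xq] := q_primepi_bounds x.
apply/idP/idP => [le_qjx | le_jpi]; last by rewrite (leq_trans _ le_qx) ?leq_q.
by rewrite -ltnS -ltn_q (leq_ltn_trans le_qjx).
Qed.

Lemma primepi_q j : primepi (q j) = j.
Proof.
apply/eqP; rewrite eqn_leq -leq_q_primepi leqnn andbT -ltnS.
by rewrite ltnNge -leq_q_primepi -ltnNge ltn_qS.
Qed.

Lemma q_primepi x : prime x -> q (primepi x) = x.
Proof.
move=> px; have /andP[le_qx lt_xq] := q_primepi_bounds x.
apply/eqP; rewrite eqn_leq le_qx /=; move: lt_xq; rewrite qS ltnNge.
apply: contraNT; rewrite -ltnNge => lt_qx.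
by case: (next_primeP (q (primepi x))) => _ _ ->.
Qed.

Lemma primepi_gt0 x : (0 < primepi x) = (1 < x).
Proof. by rewrite -leq_q_primepi q1. Qed.

Lemma primepi_prime_gt0 x : prime x -> 0 < primepi x.
Proof. by move=> px; rewrite primepi_gt0 prime_gt1. Qed.

Lemma leq_primepi : {homo primepi : x y / x <= y}.
Proof.
move=> x y le_xy; rewrite -leq_q_primepi (leq_trans _ le_xy) //.
by case/andP: (q_primepi_bounds x).
Qed.

Lemma eq_q x j : 0 < j -> (x == q j) = prime x && (j == primepi x).
Proof.
move=> j_gt0; apply/eqP/andP => [->|[px /eqP->]]; last by rewrite q_primepi.
by rewrite q_prime // primepi_q.
Qed.

Lemma sum_primes_primepi_leq n m :
  (\sum_(b < n) (prime b.+1 && (primepi b.+1 <= m)))%N = minn (primepi n) m.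
Proof.
elim: n => [|n IHn]; first by rewrite big_ord0 primepi0 min0n.
rewrite big_ord_recr /= IHn primepiS; case: (prime n.+1); rewrite /= ?addn0 //.
by case: leqP => /= ?; lia.
Qed.

Lemma sum_primes_primepi_pred n :
  (\sum_(a < n) prime a.+1 * (primepi a.+1).-1)%N = 'C(primepi n, 2).
Proof.
elim: n => [|n IHn]; first by rewrite big_ord0 primepi0.
rewrite big_ord_recr /= IHn primepiS; case: (prime n.+1); last by rewrite !addn0.
by rewrite addn1 binS bin1 mul1n.
Qed.

Lemma phi_eq0_or_gt x : phi x = 0 \/ x < phi x.
Proof.
rewrite /phi; case: ifP => [px|_]; last by left.
by right; rewrite -{1}(q_primepi px) ltn_qS.
Qed.

Lemma iter_phi_eq0_or_gt m x : 0 < m -> iter m phi x = 0 \/ x < iter m phi x.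
Proof.
case: m => // m _; elim: m => [|m IHm]; first exact: phi_eq0_or_gt.
rewrite iterS; case: IHm => [->|lt_x]; first by left.
case: (phi_eq0_or_gt (iter m.+1 phi x)) => [->|lt_phi]; first by left.
by right; apply: ltn_trans lt_phi.
Qed.

Lemma iter_phi_neq m x : 0 < m -> 0 < x -> iter m phi x <> x.
Proof.
move=> m_gt0 x_gt0 fix_x; case: (iter_phi_eq0_or_gt x m_gt0); rewrite fix_x.
  by move=> x0; rewrite x0 in x_gt0.
by rewrite ltnn.
Qed.

Lemma local_phi_q n j :
  0 < j -> local_fun n phi (q j) = if j < primepi n then q j.+1 else 0.
Proof.
move=> j_gt0; rewrite /local_fun /phi q_prime // primepi_q !q_gt0 //=.
by rewrite -qS !leq_q_primepi; case: ltnP => [/ltnW->|]; rewrite ?andbF.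
Qed.

Lemma iter_local_phi n k x : 0 < k -> 0 < x <= n ->
  iter k (local_fun n phi) x =
    if prime x && (primepi x + k <= primepi n) then q (primepi x + k) else 0.
Proof.
move=> k_gt0 /andP[_ le_xn].
have [px|npx] := boolP (prime x); last first.
  case: k k_gt0 => // k _; rewrite iterSr {2}/local_fun /phi (negbTE npx) /= andbF.
  by elim: k => //= k ->.
have pi_x_gt0 := primepi_prime_gt0 px.
have le_pi_x := leq_primepi le_xn.
rewrite /= -{1}(q_primepi px).
elim: {k_gt0}k => [|k IHk]; first by rewrite addn0 le_pi_x.
rewrite iterS IHk addnS; case: (leqP (primepi x + k) (primepi n)) => [_|lt_pi].
  by rewrite local_phi_q ?addn_gt0 ?pi_x_gt0.
by rewrite ltnNge (ltnW lt_pi) /local_fun.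
Qed.

Local Open Scope ring_scope.

Lemma sum_nat_pred1 (R : pzSemiRingType) lo hi J (F : nat -> R) :
  \sum_(lo <= j < hi) (j == J)%:R * F j = (lo <= J < hi)%N%:R * F J.
Proof.
have [J_in|J_out] := boolP (lo <= J < hi)%N.
  rewrite (bigD1_seq J) ?mem_index_iota ?iota_uniq //= eqxx big1 ?addr0 // => j.
  by move=> /negbTE ->; rewrite mul0r.
rewrite mul0r big1_seq // => j /andP[_]; rewrite mem_index_iota => j_in.
have /negbTE-> : j != J by apply: contraNneq J_out => <-.
by rewrite mul0r.
Qed.

Section FunctionalMatrix.
Variables (R : pzSemiRingType) (n : nat).

(* The matrix whose j-th column is e_(g j), with e_0 = 0, so that
   [Mn n f] is [fun_mx n (local_fun n f)] by definition. *)
Definition fun_mx (g : nat -> nat) : 'M[R]_n :=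
  \matrix_(i < n, j < n) (g j.+1 == i.+1)%:R.

Lemma eq_fun_mx g h : (forall x, (0 < x <= n)%N -> g x = h x) -> fun_mx g = fun_mx h.
Proof. by move=> gh; apply/matrixP => a b; rewrite !mxE gh // ltn_ord. Qed.

Lemma fun_mx_id : fun_mx id = 1%:M.
Proof. by apply/matrixP => a b; rewrite !mxE eqSS eq_sym. Qed.

Lemma mul_fun_mx g h :
  fun_mx g *m fun_mx h = fun_mx (fun x => if (0 < h x <= n)%N then g (h x) else 0).
Proof.
apply/matrixP => a b; rewrite !mxE.
transitivity (\sum_(1 <= c < n.+1) (c == h b.+1)%:R * (g c == a.+1)%:R : R).
  rewrite big_add1 big_mkord; apply: eq_bigr => c _.
  by rewrite !mxE [h _ == _]eq_sym; apply: commr_nat.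
by rewrite sum_nat_pred1 ltnS; case: ifP; rewrite ?mul1r ?mul0r.
Qed.

End FunctionalMatrix.

Arguments fun_mx {R} n g.
Arguments fun_mx_id {R n}.

Lemma Mn_exp n f k : Mn n f ^+ k = fun_mx n (iter k (local_fun n f)).
Proof.
elim: k => [|k IHk]; first by rewrite expr0 (@eq_fun_mx _ _ _ id) ?fun_mx_id.
rewrite exprS IHk -mulmxE mul_fun_mx; apply: eq_fun_mx => x _ /=.
by case: ifP => // y_out; rewrite /local_fun y_out.
Qed.

Lemma nnzE n (A : 'M[int]_n) : nnz A = (\sum_(a < n) \sum_(b < n) (A a b != 0))%N.
Proof.
rewrite /nnz -sum1_card pair_bigA big_mkcond /=.
by apply: eq_bigr => ab _; rewrite inE; case: (_ != _).
Qed.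

Lemma nnz_eq0 n (A : 'M[int]_n) : (nnz A == 0)%N = (A == 0).
Proof.
rewrite /nnz cards_eq0; apply/eqP/eqP => [A0|->].
  apply/matrixP => a b; rewrite mxE; apply/eqP; apply: contraT => Aab.
  by have := in_set0 (a, b); rewrite -A0 inE Aab.
by apply/setP => ab; rewrite !inE mxE eqxx.
Qed.

Lemma sum_ord_pred1 n v : (\sum_(a < n) (v == a.+1) = (0 < v <= n))%N.
Proof.
elim: n => [|n IHn]; first by rewrite big_ord0; case: v.
rewrite big_ord_recr /= IHn.
case: (eqVneq v n.+1) => [->|neq]; first by rewrite ltnn leqnn.
by rewrite addn0 [(v <= n.+1)%N]leq_eqVlt (negbTE neq) ltnS.
Qed.

Lemma nnz_fun_mx n g : nnz (fun_mx n g) = (\sum_(b < n) (0 < g b.+1 <= n))%N.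
Proof.
rewrite nnzE exchange_big; apply: eq_bigr => b _; rewrite -sum_ord_pred1.
by apply: eq_bigr => a _; rewrite mxE; case: (g b.+1 == a.+1).
Qed.

Lemma nilpotent_invmx_1B (R : comUnitRingType) n (A : 'M[R]_n) N : A ^+ N = 0 ->
  1%:M - A \in unitmx /\ invmx (1%:M - A) = \sum_(k < N) A ^+ k.
Proof.
move=> AN0; have inv : (1%:M - A) *m \sum_(k < N) A ^+ k = 1%:M.
  by rewrite mulmxE -opprB mulNr -subrX1 AN0 sub0r opprK.
have [unitB _] := mulmx1_unit inv.
by split=> //; rewrite -[RHS](mulKmx unitB) inv mulmx1.
Qed.

Lemma sum_triangle_reindex (V : nmodType) N (F : nat -> nat -> V) :
  \sum_(1 <= k < N) \sum_(1 <= j < (N - k).+1) F (j + k) j =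
  \sum_(1 <= i < N.+1) \sum_(1 <= j < i) F i j.
Proof.
elim: N => [|N IHN]; first by rewrite !big_geq.
case: N IHN => [_|N IHN]; first by rewrite big_geq // big_nat1 big_geq.
rewrite [RHS]big_nat_recr //= -IHN.
transitivity (\sum_(1 <= k < N.+2) (\sum_(1 <= j < (N.+1 - k)%N.+1) F (j + k)%N j
                                     + F N.+2 (N.+2 - k)%N)).
  apply: eq_big_nat => k /andP[k_gt0 k_lt]; rewrite big_nat_recr /=; last by lia.
  by congr (_ + _); [rewrite subSn // | congr (F _ _); lia].
rewrite big_split /= big_nat_recr //= subnn [\sum_(1 <= j < 1) _]big_geq // addr0.
congr (_ + _).
rewrite [RHS]big_nat_rev; apply: eq_big_nat => k _; congr (F _ _); lia.
Qed.

Lemma Mn_phi_exp n k : (0 < k)%N ->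
  Mn n phi ^+ k = \sum_(1 <= j < (primepi n - k).+1) En n (q (j + k)) (q j).
Proof.
move=> k_gt0; rewrite Mn_exp; apply/matrixP => a b; rewrite summxE mxE.
rewrite iter_local_phi ?ltn_ord //.
have [pb|npb] := boolP (prime b.+1); last first.
  rewrite big1_seq // => j /andP[_]; rewrite mem_index_iota => /andP[j_gt0 _].
  by rewrite mxE (eq_q _ j_gt0) (negbTE npb) andbF.
set J := primepi b.+1; have J_gt0 : (0 < J)%N := primepi_prime_gt0 pb.
transitivity (\sum_(1 <= j < (primepi n - k).+1)
                (j == J)%:R * (a.+1 == q (J + k))%:R : int).
  rewrite sum_nat_pred1 /=.
  have -> : (1 <= J < (primepi n - k).+1)%N = (J + k <= primepi n)%N by lia.
  by case: ifP; rewrite ?mul1r ?mul0r // eq_sym.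
apply: eq_big_nat => j /andP[j_gt0 _]; rewrite mxE (eq_q _ j_gt0) pb /=.
by case: eqP => [->|_]; rewrite ?andbT ?andbF ?mul1r ?mul0r.
Qed.

Lemma nnz_Mn_phi_exp n k : (0 < k)%N -> nnz (Mn n phi ^+ k) = (primepi n - k)%N.
Proof.
move=> k_gt0; rewrite Mn_exp nnz_fun_mx.
rewrite -[RHS](minn_idPr (leq_subr k _)) -sum_primes_primepi_leq.
apply: eq_bigr => b _; congr (nat_of_bool _); rewrite iter_local_phi ?ltn_ord //.
case: (boolP (prime b.+1)) => //= pb; have := primepi_prime_gt0 pb.
case: ifP => [le_pi _ | /negbT ? ?]; last by apply/esym/negbTE; lia.
by rewrite leq_q_primepi le_pi q_gt0; lia.
Qed.

Lemma Mn_phi_exp_eq0 n k : (0 < k)%N -> (Mn n phi ^+ k == 0) = (primepi n <= k)%N.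
Proof. by move=> k_gt0; rewrite -nnz_eq0 nnz_Mn_phi_exp // subn_eq0. Qed.

Lemma Mn_phi_nilpotent n : (1 < n)%N -> nilpotent_of_degree (Mn n phi) (primepi n).
Proof.
move=> n_gt1; have N_gt0 : (0 < primepi n)%N by rewrite primepi_gt0.
split; first by apply/eqP; rewrite Mn_phi_exp_eq0.
case E: (primepi n) => [|[|k]] /=;
  [by rewrite E in N_gt0 | | by apply/eqP; rewrite Mn_phi_exp_eq0 // E ltnn].
have n_gt0 : (0 < n)%N by apply: ltnW.
by rewrite expr0 => /matrixP/(_ (Ordinal n_gt0) (Ordinal n_gt0)); rewrite !mxE eqxx.
Qed.

Lemma invmx_Mhat_phi n : (1 < n)%N ->
  Mhat n phi \in unitmx /\
  invmx (Mhat n phi) =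
    1%:M + \sum_(1 <= i < (primepi n).+1) \sum_(1 <= j < i) En n (q i) (q j).
Proof.
move=> n_gt1; have N_gt0 : (0 < primepi n)%N by rewrite primepi_gt0.
have /eqP MN0 : Mn n phi ^+ primepi n == 0 by rewrite Mn_phi_exp_eq0.
have [unitM ->] := nilpotent_invmx_1B MN0; split=> //.
rewrite -sum_triangle_reindex -(big_mkord xpredT) big_ltn // expr0.
by congr (_ + _); apply: eq_big_nat => k /andP[k_gt0 _]; apply: Mn_phi_exp.
Qed.

Lemma sum_En_lower_mxE n (a b : 'I_n) :
  (\sum_(1 <= i < (primepi n).+1) \sum_(1 <= j < i) En n (q i) (q j)) a b =
  (prime a.+1 && prime b.+1 && (primepi b.+1 < primepi a.+1)%N)%:R.
Proof.
(* By [eq_q], [a.+1 == q i] singles out [i = primepi a.+1], so both sums collapse. *)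
rewrite summxE.
set c := prime a.+1 && prime b.+1.
transitivity (\sum_(1 <= i < (primepi n).+1) (i == primepi a.+1)%:R *
                (c && (1 <= primepi b.+1 < primepi a.+1)%N)%:R : int).
  apply: eq_big_nat => i /andP[i_gt0 _]; rewrite summxE.
  transitivity (\sum_(1 <= j < i)
                 (j == primepi b.+1)%:R * (c && (i == primepi a.+1))%:R : int).
    apply: eq_big_nat => j /andP[j_gt0 _]; rewrite mxE (eq_q _ i_gt0) (eq_q _ j_gt0) /c.
    by case: (j == _); case: (i == _); case: (prime a.+1); case: (prime b.+1);
       rewrite ?mul1r ?mul0r.
  rewrite sum_nat_pred1; case: eqP => [->|_]; rewrite ?andbT ?andbF ?mulr0 ?mul0r //.
  by rewrite mul1r -natrM mulnb andbC.
rewrite sum_nat_pred1 -natrM mulnb /c.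
case: (boolP (prime a.+1)) => /= pa; rewrite ?andbF //.
case: (boolP (prime b.+1)) => /= pb; rewrite ?andbF //.
have := leq_primepi (ltn_ord a); have := primepi_prime_gt0 pa.
have := primepi_prime_gt0 pb; rewrite /= => *; congr (_%:R); lia.
Qed.

Lemma nnz_1_sum_En_lower n :
  nnz (1%:M + \sum_(1 <= i < (primepi n).+1) \sum_(1 <= j < i) En n (q i) (q j)) =
  (n + 'C(primepi n, 2))%N.
Proof.
rewrite nnzE -sum_primes_primepi_pred -[X in (X + _)%N](card_ord n) -sum1_card.
rewrite -big_split /=.
apply: eq_bigr => a _.
transitivity (\sum_(b < n) ((a.+1 == b.+1) +
   (prime a.+1 && (prime b.+1 && (primepi b.+1 <= (primepi a.+1).-1)))))%N.
  apply: eq_bigr => b _; rewrite !mxE sum_En_lower_mxE eqSS val_eqE.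
  have := @primepi_prime_gt0 a.+1; case: (eqVneq a b) => [<-|neq] /=.
    by case: (prime a.+1) => /= [/(_ isT) ?|_]; rewrite ?ltnn /=; lia.
  case: (prime a.+1) => /= [/(_ isT) ?|_] //.
  by case: (prime b.+1); case: ltnP => /= ?; lia.
rewrite big_split /= sum_ord_pred1 ltn_ord add1n; congr (_.+1).
case: (boolP (prime a.+1)) => pa; last by rewrite big1.
rewrite mul1n sum_primes_primepi_leq; apply/minn_idPr.
exact: leq_trans (leq_pred _) (leq_primepi (ltn_ord a)).
Qed.

Theorem proposition5p3 :
  (forall x : nat, (0 < x)%N -> phi x <> x) /\
  ~ (exists m x : nat, (2 <= m)%N /\ (0 < x)%N /\ iter m phi x = x) /\
  (forall n : nat, (2 <= n)%N ->
     nilpotent_of_degree (Mn n phi) (primepi n) /\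
     (forall k : nat, (1 <= k <= primepi n)%N ->
        Mn n phi ^+ k =
          \sum_(1 <= j < (primepi n - k).+1) En n (q (j + k)) (q j) /\
        nnz (Mn n phi ^+ k) = (primepi n - k)%N) /\
     (Mhat n phi \in unitmx /\
      invmx (Mhat n phi) =
        1%:M + \sum_(1 <= i < (primepi n).+1) \sum_(1 <= j < i) En n (q i) (q j) /\
      nnz (invmx (Mhat n phi)) = (n + 'C(primepi n, 2))%N)).
Proof.
split; first by move=> x; apply: (@iter_phi_neq 1).
split; first by case=> m [x [m_gt1 [x_gt0]]]; apply: iter_phi_neq (ltnW m_gt1) x_gt0.
move=> n n_gt1; have [unitM invM] := invmx_Mhat_phi n_gt1.
split; first exact: Mn_phi_nilpotent.
split; first by move=> k /andP[k_gt0 _]; rewrite nnz_Mn_phi_exp // Mn_phi_exp.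
by rewrite invM nnz_1_sum_En_lower.
Qed.
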